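(* Let $g:\mathbb{R}\to\mathbb{R}$ with $g(0)=0$ satisfy: (C1) $|g(x)|\le c+d|x|$ for all $x$, for some constants $c,d\ge0$; (C2) $g(x)<0$ for $x<0$ and $g(x)>0$ for $x>0$; (C3) $\inf_{\delta_1\le|x|\le\delta_2}|g(x)|>0$ for every $0<\delta_1<\delta_2<\infty$. Let $\{\mathcal{F}_n\}_{n\ge0}$ be a filtration, $X_0$ an integrable $\mathcal{F}_0$-measurable random variable, and $X_n=X_{n-1}-\alpha_nU_n$, $n\ge1$, where each $U_n$ is integrable and $\mathcal{F}_n$-measurable, and the constants $\alpha_n$ satisfy $\alpha_n\ge0$, $\alpha_n\to0$, $\sum_n\alpha_n=\infty$. Assume $E[U_n\mid\mathcal{F}_{n-1}]=g(X_{n-1})$ a.e. for $n\ge1$, and that the series $\sum_{i\ge1}\alpha_i\{U_i-E[U_i\mid\mathcal{F}_{i-1}]\}$ converges a.e. Then $X_n\to0$ a.e. *)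

From HB Require Import structures.
From mathcomp Require Import all_boot all_order all_algebra.
From mathcomp Require Import all_classical all_reals all_analysis.
Set Implicit Arguments. Unset Strict Implicit. Unset Printing Implicit Defensive.
Import Order.TTheory GRing.Theory Num.Theory.
Import numFieldNormedType.Exports.
Local Open Scope classical_set_scope.
Local Open Scope ring_scope.

Section defs.
Context {d : measure_display} {T : measurableType d} {R : realType}.

Definition sub_sigma_algebra (G : set (set T)) :=
  sigma_algebra setT G /\ G `<=` measurable.

Definition filtration (F : nat -> set (set T)) :=
  (forall n, sub_sigma_algebra (F n)) /\ (forall n m, (n <= m)%N -> F n `<=` F m).

Definition G_measurable (G : set (set T)) (f : T -> R) :=
  forall B : set R, measurable B -> G (f @^-1` B).

Definition cond_exp_version (P : probability T R) (G : set (set T))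
    (Y Z : T -> R) :=
  [/\ G_measurable G Z, P.-integrable setT (EFin \o Z) &
      forall A, G A -> (\int[P]_(x in A) (Y x)%:E = \int[P]_(x in A) (Z x)%:E)%E].
End defs.

From HB Require Import structures.
From mathcomp Require Import all_boot all_order all_algebra.
From mathcomp Require Import all_classical all_reals all_analysis.
From mathcomp Require Import lra.
Set Implicit Arguments. Unset Strict Implicit. Unset Printing Implicit Defensive.
Import Order.TTheory GRing.Theory Num.Theory.
Import numFieldNormedType.Exports.
Local Open Scope classical_set_scope.
Local Open Scope ring_scope.

(* The argument is pathwise. Subtracting from X_n the tail r_n of the
   convergent noise series leaves w_n := X_n - r_n with the noiseless
   recursion w_{n+1} = w_n - alpha_{n+1} g(w_n + r_n), where r_n -> 0.
   Fix eps > 0. Once alpha_n and r_n are small, a step started outside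
   [-eps/2, eps/2] moves w towards 0 without overshooting, and a step
   started inside it stays within [-eps, eps]; so |w_n| never exceeds
   max(|w_N|, eps). Outside [-eps/2, eps/2] condition (C3) bounds |g| below
   by some m > 0, so |w| decreases by at least m alpha_{n+1} per step, and
   since sum alpha = oo this cannot last forever: w enters [-eps/2, eps/2]
   and stays in [-eps, eps] from then on. *)

Section PerturbedDescent.
Variables (R : realType) (g : R -> R) (c dd : R).
Hypotheses (dd_ge0 : 0 <= dd)
  (g_growth : forall y, `|g y| <= c + dd * `|y|)
  (g_neg : forall y, y < 0 -> g y < 0) (g_pos : forall y, 0 < y -> 0 < g y)
  (g_bounded_away : forall d1 d2 : R, 0 < d1 -> d1 < d2 ->
     exists m : R, 0 < m /\ forall y, d1 <= `|y| <= d2 -> m <= `|g y|).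

Definition small_step (eps a r : R) :=
  [/\ 0 <= a, `|r| <= eps / 4, a * dd <= 1 / 2 & a * (c + dd * eps) <= eps / 4].

Lemma small_stepN eps a r : small_step eps a r -> small_step eps a (- r).
Proof. by case=> a0 hr; rewrite /small_step normrN; split. Qed.

Lemma step_far_pos eps w r a gx : 0 < eps -> small_step eps a r ->
  (0 < w + r -> 0 < gx) -> `|gx| <= c + dd * `|w + r| ->
  eps / 2 < w -> `|w - a * gx| = w - a * `|gx|.
Proof.
move=> eps_gt0 [a_ge0 + a_dd a_cdd] gx_pos gx_le w_gt; rewrite ler_norml.
move=> /andP[r_ge r_le].
have wr_gt0 : 0 < w + r by lra.
have gx_gt0 := gx_pos wr_gt0.
rewrite (gtr0_norm gx_gt0) (gtr0_norm wr_gt0) in gx_le *.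
have agx_le : a * gx <= a * c + a * dd * (w + r).
  by rewrite -mulrA -mulrDr; exact: ler_wpM2l.
have add_w : a * dd * w <= w / 2 by nra.
have add_r : a * dd * r <= a * dd * (eps / 4) by rewrite ler_wpM2l // mulr_ge0.
have add_eps := mulr_ge0 (mulr_ge0 a_ge0 dd_ge0) (ltW eps_gt0).
by rewrite ger0_norm //; lra.
Qed.

Lemma step_far eps w r a : 0 < eps -> small_step eps a r ->
  eps / 2 < `|w| -> `|w - a * g (w + r)| = `|w| - a * `|g (w + r)|.
Proof.
move=> eps_gt0 small w_far; have [w_ge0|w_lt0] := lerP 0 w.
  have w_far' : eps / 2 < w by rewrite -(ger0_norm w_ge0).
  have := step_far_pos eps_gt0 small (@g_pos (w + r)) (g_growth _) w_far'.
  by rewrite (ger0_norm w_ge0).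
have w_far' : eps / 2 < - w by rewrite -(ltr0_norm w_lt0).
have neg_pos : 0 < - w + - r -> 0 < - g (w + r).
  by move=> h; rewrite oppr_gt0; apply: g_neg; lra.
have neg_growth : `|- g (w + r)| <= c + dd * `|- w + - r|.
  by rewrite -opprD !normrN.
have := step_far_pos eps_gt0 (small_stepN small) neg_pos neg_growth w_far'.
rewrite (ltr0_norm w_lt0) !normrN mulrN opprK => <-.
by rewrite -normrN opprD opprK addrC.
Qed.

Lemma step_near eps w r a : 0 < eps -> small_step eps a r ->
  `|w| <= eps / 2 -> `|w - a * g (w + r)| <= eps.
Proof.
move=> eps_gt0 [a_ge0 r_le a_dd a_cdd] w_near.
have wr_le : `|w + r| <= eps / 2 + eps / 4.
  by apply: (le_trans (ler_normD _ _)); lra.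
have agx_le : a * `|g (w + r)| <= a * c + a * dd * (eps / 2 + eps / 4).
  rewrite -mulrA -mulrDr; apply: ler_wpM2l => //.
  by apply: (le_trans (g_growth _)); rewrite lerD // ler_wpM2l.
have dd_eps : a * dd * (eps / 2 + eps / 4) <= a * (dd * eps).
  by rewrite -mulrA ler_wpM2l // ler_wpM2l //; lra.
apply: (le_trans (ler_normB _ _)); rewrite normrM (ger0_norm a_ge0); lra.
Qed.

Lemma step_le_max eps w r a : 0 < eps -> small_step eps a r ->
  `|w - a * g (w + r)| <= Num.max `|w| eps.
Proof.
move=> eps_gt0 small; have [w_near|w_far] := lerP `|w| (eps / 2).
  by rewrite le_max (step_near eps_gt0 small w_near) orbT.
rewrite le_max (step_far eps_gt0 small w_far); case: small => a_ge0 _ _ _.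
by rewrite gerBl mulr_ge0.
Qed.

Section Descent.
Variables (w r a : nat -> R).
Hypotheses (w_rec : forall n, w n.+1 = w n - a n.+1 * g (w n + r n))
  (a_ge0 : forall n, 0 <= a n.+1) (a_cvg0 : a @ \oo --> 0)
  (r_cvg0 : r @ \oo --> 0)
  (a_sum : (fun n => \sum_(1 <= i < n.+1) a i) @ \oo --> +oo).

Lemma small_step_eventually eps : 0 < eps ->
  \forall n \near \oo, small_step eps (a n.+1) (r n).
Proof.
move=> eps_gt0.
have a1_cvg0 : (fun n => a n.+1) @ \oo --> 0 by rewrite cvg_shiftS.
have Ma1_cvg0 k : (fun n => a n.+1 * k) @ \oo --> 0.
  by rewrite -(mul0r k); apply: cvgM => //; exact: cvg_cst.
have r_small : \forall n \near \oo, `|r n| <= eps / 4.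
  by move/cvgr0Pnorm_le : r_cvg0; apply; lra.
have a_dd_small := cvgr_le _ (Ma1_cvg0 dd) (1 / 2).
have a_cdd_small := cvgr_le _ (Ma1_cvg0 (c + dd * eps)) (eps / 4).
near=> n; split => //.
- by near: n; exact: r_small.
- by near: n; apply: a_dd_small; lra.
- by near: n; apply: a_cdd_small; lra.
Unshelve. all: by end_near.
Qed.

Lemma norm_le_max_after eps N : 0 < eps ->
    (forall n, (N <= n)%N -> small_step eps (a n.+1) (r n)) ->
  forall n, (N <= n)%N -> `|w n| <= Num.max `|w N| eps.
Proof.
move=> eps_gt0 small n /subnK <-; elim: (n - N)%N => [|k IH].
  by rewrite add0n le_max lexx.
rewrite addSn w_rec; apply: le_trans (step_le_max _ eps_gt0 (small _ _)) _.
  exact: leq_addl.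
by rewrite ge_max IH le_max lexx orbT.
Qed.

Lemma norm_descent_far eps m N : 0 < eps ->
    (forall n, (N <= n)%N -> small_step eps (a n.+1) (r n)) ->
    (forall n, (N <= n)%N -> eps / 2 < `|w n|) ->
    (forall n, (N <= n)%N -> m <= `|g (w n + r n)|) ->
  forall n, (N <= n)%N -> `|w n| <= `|w N| - m * \sum_(N.+1 <= i < n.+1) a i.
Proof.
move=> eps_gt0 small far g_ge n /subnK <-; elim: (n - N)%N => [|k IH].
  by rewrite add0n big_geq // mulr0 subr0.
have Nk : (N <= k + N)%N by exact: leq_addl.
rewrite addSn w_rec (step_far eps_gt0 (small _ Nk) (far _ Nk)).
rewrite big_nat_recr ?ltnS //= mulrDr opprD addrA.
have := a_ge0 (k + N); have := g_ge _ Nk; nra.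
Qed.

Lemma eventually_near_zero eps N : 0 < eps ->
    (forall n, (N <= n)%N -> small_step eps (a n.+1) (r n)) ->
  exists2 M, (N <= M)%N & `|w M| <= eps / 2.
Proof.
move=> eps_gt0 small; apply: contrapT => never_near.
have far n : (N <= n)%N -> eps / 2 < `|w n|.
  by move=> Nn; rewrite ltNge; apply/negP => w_near; apply: never_near; exists n.
pose K := Num.max `|w N| eps.
have eps_le_K : eps <= K by rewrite le_max lexx orbT.
have quarter_gt0 : 0 < eps / 4 by lra.
have quarter_lt : eps / 4 < K + eps / 2 by lra.
have [m [m_gt0 m_le]] := g_bounded_away quarter_gt0 quarter_lt.
have g_ge n : (N <= n)%N -> m <= `|g (w n + r n)|.
  move=> Nn; apply: m_le; have [_ r_le _ _] := small _ Nn.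
  have w_le_K : `|w n| <= K := norm_le_max_after eps_gt0 small Nn.
  have := far _ Nn; have := lerB_normD (w n) (r n); have := ler_normD (w n) (r n).
  by move=> *; apply/andP; split; lra.
have descent := norm_descent_far eps_gt0 small far g_ge.
pose partial n := \sum_(1 <= i < n.+1) a i.
have partial_split n : (N <= n)%N ->
    partial n = partial N + \sum_(N.+1 <= i < n.+1) a i.
  by move=> Nn; rewrite /partial (big_cat_nat (n := N.+1)).
move/cvgryPge : a_sum => /(_ (partial N + `|w N| / m + 1)) [N' _ large].
have NN' := leq_maxl N N'.
have := large _ (leq_maxr N N'); rewrite /= -/(partial _) (partial_split _ NN').
set S := \sum_(N.+1 <= i < _) a i => S_large.
have mS_large : `|w N| + m <= m * S.
  have : m * (`|w N| / m + 1) <= m * S by rewrite ler_pM2l //; lra.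
  by rewrite mulrDr mulr1 mulrC divfK ?gt_eqF.
have := descent _ NN'; rewrite -/S; have := normr_ge0 (w (maxn N N')); lra.
Qed.

Theorem perturbed_descent_cvg0 : w @ \oo --> 0.
Proof.
apply/cvgr0Pnorm_le => eps eps_gt0.
have [N _ small] := small_step_eventually eps_gt0.
have [M NM w_M] := eventually_near_zero eps_gt0 small.
have small_M n : (M <= n)%N -> small_step eps (a n.+1) (r n).
  by move=> Mn; apply: small; exact: leq_trans Mn.
exists M => // n Mn; apply: le_trans (norm_le_max_after eps_gt0 small_M Mn) _.
by rewrite ge_max lexx andbT; lra.
Qed.

End Descent.

Lemma noisy_descent_cvg0 (x e a : nat -> R) :
  (forall n, x n.+1 = x n - a n.+1 * (g (x n) + e n.+1)) ->
  (forall n, 0 <= a n.+1) -> a @ \oo --> 0 ->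
  (fun n => \sum_(1 <= i < n.+1) a i) @ \oo --> +oo ->
  cvg ((fun n => \sum_(1 <= i < n.+1) a i * e i) @ \oo) ->
  x @ \oo --> 0.
Proof.
move=> x_rec a_ge0 a_cvg0 a_sum noise_cvg.
pose S n := \sum_(1 <= i < n.+1) a i * e i.
pose r n := lim (S @ \oo) - S n.
have r_cvg0 : r @ \oo --> 0.
  by rewrite -(subrr (lim (S @ \oo))); apply: cvgB => //; exact: cvg_cst.
have w_rec n : x n.+1 - r n.+1 = x n - r n - a n.+1 * g (x n - r n + r n).
  by rewrite subrK /r /S big_nat_recr //= x_rec; lra.
have w_cvg0 := perturbed_descent_cvg0 w_rec a_ge0 a_cvg0 r_cvg0 a_sum.
have -> : x = (fun n => x n - r n + r n) by apply: funext => n; rewrite subrK.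
by rewrite -[0](addr0 0); exact: cvgD.
Qed.

End PerturbedDescent.

(* Once V_n = g(X_{n-1}) almost surely, the integrability, measurability and
   conditional-expectation hypotheses play no further role. *)
Theorem mainTheorem5 (R : realType) (g : R -> R) (d : measure_display)
  (T : measurableType d) (P : probability T R) (F : nat -> set (set T))
  (X U V : nat -> T -> R) (alpha : nat -> R) :
  g 0 = 0 ->
  (exists c dd : R, [/\ 0 <= c, 0 <= dd & forall x, `|g x| <= c + dd * `|x|]) ->
  (forall x, x < 0 -> g x < 0) -> (forall x, 0 < x -> 0 < g x) ->
  (forall d1 d2 : R, 0 < d1 -> d1 < d2 ->
     exists m : R, 0 < m /\ forall x, d1 <= `|x| <= d2 -> m <= `|g x|) ->
  filtration F ->
  P.-integrable setT (EFin \o X 0%N) -> G_measurable (F 0%N) (X 0%N) ->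
  (forall n, (0 < n)%N -> forall x, X n x = X n.-1 x - alpha n * U n x) ->
  (forall n, (0 < n)%N ->
     P.-integrable setT (EFin \o U n) /\ G_measurable (F n) (U n)) ->
  (forall n, (0 < n)%N -> 0 <= alpha n) ->
  alpha @ \oo --> 0 ->
  (fun n => \sum_(1 <= i < n.+1) alpha i) @ \oo --> +oo ->
  (* V n is (a version of) E[U_n | F_{n-1}], n >= 1 *)
  (forall n, (0 < n)%N -> cond_exp_version P (F n.-1) (U n) (V n)) ->
  (forall n, (0 < n)%N -> {ae P, forall x, V n x = g (X n.-1 x)}) ->
  {ae P, forall x, cvg ((fun n => \sum_(1 <= i < n.+1)
                           alpha i * (U i x - V i x)) @ \oo)} ->
  {ae P, forall x, (fun n => X n x) @ \oo --> 0}.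
Proof.
move=> _ [c [dd [_ dd_ge0 g_growth]]] g_neg g_pos g_bounded_away _ _ _.
move=> X_rec _ alpha_ge0 alpha_cvg0 alpha_sum _ V_eq noise_cvg.
have V_eq_all : {ae P, forall x n, V n.+1 x = g (X n x)}.
  exact: ae_foralln (fun n => V_eq n.+1 erefl).
apply: filterS2 V_eq_all noise_cvg => x V_x noise_x.
apply: (noisy_descent_cvg0 dd_ge0 g_growth g_neg g_pos g_bounded_away
  (e := fun i => U i x - V i x) (a := alpha)) => //.
- by move=> n; rewrite (X_rec n.+1 erefl) -(V_x n) addrCA subrr addr0.
- by move=> n; exact: alpha_ge0.
Qed.
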